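(* Let $k$ be a field, $A$ a noetherian $k$-algebra, $\Delta$ a finite set and $\Gamma$ a totally ordered abelian group. The natural map $$\iota_0:\bigotimes_{\alpha\in\Delta,k}A[[t_\alpha^\Gamma]]\longrightarrow\Big(\bigotimes_{\alpha\in\Delta,k}A\Big)[[t_\alpha^\Gamma\mid\alpha\in\Delta]]$$ is injective. Moreover, for every finite family $(\underline{\gamma_i})_{1\le i\le m}$ of multi-indices in $\Gamma_{\ge0}^\Delta$, one has $\iota_0^{-1}\big((t^{\underline{\gamma_i}}\mid1\le i\le m)\big)=(t^{\underline{\gamma_i}}\mid1\le i\le m)$.
   Context: For a ring $B$ and totally ordered abelian groups $(\Gamma_\alpha)_{\alpha\in\Delta}$ ($\Delta$ finite), the multivariable Hahn–Mal'cev series ring $B[[t_\alpha^{\Gamma_\alpha}\mid\alpha\in\Delta]]$ is the set of formal sums $\sum_{\underline{\gamma}\in\prod_\alpha\Gamma_{\alpha,\ge0}}a_{\underline{\gamma}}t^{\underline{\gamma}}$ ($a_{\underline\gamma}\in B$) such that for every $\underline{\delta}\in\prod_\alpha\Gamma_{\alpha,\ge0}$ and every $\alpha\in\Delta$, the set $\{\gamma_\alpha\le\delta_\alpha\mid\exists\underline{\gamma}'\in\prod_{\beta\ne\alpha}\Gamma_{\beta,[0,\delta_\beta]},\ a_{(\gamma_\alpha,\underline{\gamma}')}\ne0\}$ is well ordered; it is a $B$-algebra with termwise addition and the convolution product. For $|\Delta|=1$ this is the usual Hahn series ring $B[[t^\Gamma]]$. Here all $\Gamma_\alpha=\Gamma$;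 $\iota_0$ is induced by the maps $A[[t_\alpha^\Gamma]]\to(\bigotimes_kA)[[t_\beta^\Gamma\mid\beta\in\Delta]]$ placing coefficients in the $\alpha$-th tensor factor; $t^{\underline{\gamma}}=\prod_\alpha t_\alpha^{\gamma_\alpha}$, and the ideal on the left is generated by the elementary tensors $\otimes_\alpha t_\alpha^{\gamma_{i,\alpha}}$. *)

From HB Require Import structures.
From mathcomp Require Import all_boot all_order all_algebra.
Set Implicit Arguments.
Unset Strict Implicit.
Unset Printing Implicit Defensive.
Import Order.TTheory GRing.Theory.
Local Open Scope ring_scope.

Record ordered_group (G : zmodType) (le : rel G) : Prop := {
  og_refl  : reflexive le;
  og_anti  : antisymmetric le;
  og_trans : transitive le;
  og_total : total le;
  og_add   : forall x y z, le x y -> le (x + z) (y + z) }.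

Definition well_ordered (G : Type) (le : rel G) (S : G -> Prop) : Prop :=
  forall T : G -> Prop, (forall x, T x -> S x) -> (exists x, T x) ->
  exists2 m, T m & forall y, T y -> le m y.

Definition is_ideal (R : comPzRingType) (I : R -> Prop) : Prop :=
  [/\ I 0, (forall x y, I x -> I y -> I (x + y)) & (forall a x, I x -> I (a * x))].

Definition finitely_generated_ideal (R : comPzRingType) (I : R -> Prop) : Prop :=
  exists s : seq R, forall x,
    I x <-> exists c : 'I_(size s) -> R, x = \sum_(i < size s) c i * s`_i.

Definition noetherian (R : comPzRingType) : Prop :=
  forall I : R -> Prop, is_ideal I -> finitely_generated_ideal I.

(* Let V be a k-vector space, presented as a type with addition [add],
   scalar multiplication [scale], and a predicate [P] cutting out the actual
   subspace (P = True when V is the whole type).  The tensor product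
   (over k) of the family (V)_{alpha in D} is the free k-vector space on
   D-tuples of vectors modulo the multilinearity relations.  We represent
   elements of the free vector space by formal sums
     [:: (c_1, f_1); ...; (c_n, f_n)]  =  sum_j c_j (tensor_alpha f_j alpha)
   and [teq] is the congruence "equal in the tensor product". *)
Section Tensor.
Variables (k : fieldType) (V : Type) (add : V -> V -> V) (scale : k -> V -> V)
          (P : V -> Prop) (D : finType).

Definition fsum := seq (k * {ffun D -> V}).

Definition fs_scale (c : k) (x : fsum) : fsum := [seq (c * p.1, p.2) | p <- x].

Definition tupd (f : {ffun D -> V}) (a : D) (u : V) : {ffun D -> V} :=
  [ffun b => if b == a then u else f b].

Inductive teq : fsum -> fsum -> Prop :=
| teq_refl x : teq x x
| teq_sym x y : teq x y -> teq y x
| teq_trans x y z : teq x y -> teq y z -> teq x z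
| teq_cat x x' y y' : teq x x' -> teq y y' -> teq (x ++ y) (x' ++ y')
| teq_scale c x y : teq x y -> teq (fs_scale c x) (fs_scale c y)
| teq_swap x y : teq (x ++ y) (y ++ x)
| teq_zero (f : {ffun D -> V}) : teq [:: (0, f)] [::]
| teq_merge c d (f : {ffun D -> V}) : teq [:: (c, f); (d, f)] [:: (c + d, f)]
| teq_add (f : {ffun D -> V}) (a : D) (u v : V) : (forall b, b != a -> P (f b)) -> P u -> P v ->
    teq [:: (1, tupd f a (add u v))] [:: (1, tupd f a u); (1, tupd f a v)]
| teq_smul (f : {ffun D -> V}) (a : D) (c : k) (u : V) : (forall b, b != a -> P (f b)) -> P u ->
    teq [:: (1, tupd f a (scale c u))] [:: (c, tupd f a u)].

Definition fs_in (V0 : V) (x : fsum) : Prop := forall i, (i < size x)%N -> forall a, P ((nth (0, [ffun=> V0]) x i).2 a).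

End Tensor.

Section Hahn.
Variables (G : zmodType) (le : rel G).

(* one-variable Hahn series B[[t^G]] over a ring A, as coefficient functions
   G -> A vanishing outside G_{>=0} (the |Delta| = 1 case of the definition) *)
Definition hahn1 (A : pzRingType) (f : G -> A) : Prop :=
  (forall g, f g != 0 -> le 0 g) /\
  forall d, le 0 d -> well_ordered le (fun g => le g d /\ le 0 g /\ f g != 0).

(* monomial shift: f * t^g *)
Definition shift1 (A : pzRingType) (g : G) (f : G -> A) : G -> A :=
  fun x => if le g x then f (x - g) else 0.

(* multivariable Hahn series B[[t_alpha^G | alpha in D]] with coefficients
   in B given as a type with a predicate [isz] ("is zero in B") *)
Definition mhahn (D : finType) (B : Type) (isz : B -> Prop)
    (a : {ffun D -> G} -> B) : Prop :=
  (forall g, ~ isz (a g) -> forall al, le 0 (g al)) /\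
  forall d : {ffun D -> G}, (forall al, le 0 (d al)) -> forall al,
    well_ordered le (fun x => le x (d al) /\
      exists g : {ffun D -> G}, [/\ g al = x,
        (forall be, be != al -> le 0 (g be) /\ le (g be) (d be)) & ~ isz (a g)]).

End Hahn.

Section Iota.
Variables (k : fieldType) (A : comAlgType k) (G : zmodType) (le : rel G) (D : finType).

Definition tA := fsum k A D.
Definition teqA : tA -> tA -> Prop :=
  @teq k A (fun u v : A => u + v) (fun (c : k) (u : A) => c *: u) (fun _ => True) D.

Definition tH := fsum k (G -> A) D.
Definition hadd (u v : G -> A) : G -> A := fun x => u x + v x.
Definition hscale (c : k) (u : G -> A) : G -> A := fun x => c *: u x.
Definition teqH : tH -> tH -> Prop := @teq k (G -> A) hadd hscale (hahn1 le (A:=A)) D.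
Definition tH_in (x : tH) : Prop := @fs_in k (G -> A) (hahn1 le (A:=A)) D (fun _ => 0) x.

(* target ring (tensor_alpha A)[[t_alpha^G | alpha in D]]:
   coefficient functions {ffun D -> G} -> tA *)
Definition tseries := {ffun D -> G} -> tA.
Definition tseries_ok (a : tseries) : Prop :=
  mhahn le (fun b : tA => teqA b [::]) a.

Definition iota0 (x : tH) : tseries :=
  fun g => [seq (p.1, [ffun al => (p.2 : {ffun D -> G -> A}) al (g al)]) | p <- (x : seq (k * {ffun D -> G -> A}))].

Definition mnonneg (g : {ffun D -> G}) := forall al, le 0 (g al).
Definition mle (g d : {ffun D -> G}) : bool := [forall al, le (g al) (d al)].
Definition msub (d g : {ffun D -> G}) : {ffun D -> G} := [ffun al => d al - g al].

(* membership of a series in the ideal (t^{g_i} | i < m) of the target ring: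
   a = sum_i t^{g_i} h_i with h_i in the target ring
   (the product with the monomial t^{g_i} is the shift) *)
Definition in_target_ideal (m : nat) (gs : 'I_m -> {ffun D -> G}) (a : tseries) : Prop :=
  exists h : 'I_m -> tseries, (forall i, tseries_ok (h i)) /\
    forall d, teqA (a d)
      (\big[cat/[::]]_(i < m) (if (mle (gs i) d) then h i (msub d (gs i)) else [::]))
    .

(* elementary tensor (tensor_alpha t_alpha^{g alpha}) times z, i.e. the
   product in the tensor product of k-algebras: factorwise shift *)
Definition tH_mul_mono (g : {ffun D -> G}) (z : tH) : tH :=
  [seq (p.1, [ffun al => shift1 le (g al) ((p.2 : {ffun D -> G -> A}) al)]) | p <- (z : seq (k * {ffun D -> G -> A}))].

Definition in_source_ideal (m : nat) (gs : 'I_m -> {ffun D -> G}) (x : tH) : Prop :=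
  exists z : 'I_m -> tH, (forall i, tH_in (z i)) /\
    teqH x (\big[cat/[::]]_(i < m) tH_mul_mono (gs i) (z i)).

End Iota.

(* A linear form on A composed with the extraction of one coefficient is a
   "coefficient form" on A[[t^G]]; by Zorn's lemma such forms separate points,
   so every finite family of Hahn series admits a dual basis of coefficient
   forms.  If iota_0(z) = 0, every product of coefficient forms, one per
   factor, kills z, and expanding z one factor at a time in such dual bases
   shows z = 0 in the tensor product.
   For the ideals, restricting every factor to exponents >= gamma_alpha
   splits off the part of z divisible by t^gamma.  Doing this for gamma_1,
   ..., gamma_m leaves a remainder r whose image vanishes at the multi-indices
   above some gamma_i and agrees with iota_0(z) elsewhere; if iota_0(z) lies in
   the target ideal it vanishes there too, so r = 0 by injectivity. *)

From HB Require Import structures.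
From mathcomp Require Import all_boot all_order all_algebra.
From mathcomp Require Import boolp.
From mathcomp Require classical_sets.
From Stdlib Require List.
From mathcomp Require Import ring.
Set Implicit Arguments. Unset Strict Implicit. Unset Printing Implicit Defensive.
Import GRing.Theory.
Local Open Scope ring_scope.

Section FormalSums.
Variables (k : fieldType) (V : Type) (add : V -> V -> V) (scale : k -> V -> V)
          (P : V -> Prop) (D : finType).
Local Notation fsum := (fsum k V D).
Local Notation teq := (@teq k V add scale P D).

Definition all_in (x : fsum) := forall p, List.In p x -> forall a, P (p.2 a).

Lemma fs_inP v0 x : fs_in P v0 x <-> all_in x.
Proof.
elim: x => [|p x [IH1 IH2]]; first by split=> // _ p [].
split=> [H q [<-|Hq]|H [_ a|i]]; first exact: (H 0%N).
- by apply: IH1 Hq => i ix; exact: (H i.+1).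
- by apply: H; left.
- by move=> ix a; apply: IH2 ix a => q Hq; apply: H; right.
Qed.

Lemma all_in_cat x y : all_in x -> all_in y -> all_in (x ++ y).
Proof. by move=> hx hy p /(List.in_app_or x y p)[]; [exact: hx | exact: hy]. Qed.

Lemma all_in_scale c x : all_in x -> all_in (fs_scale c x).
Proof. by move=> hx p /List.in_map_iff[q [<- /hx]]. Qed.

Lemma teq_catl x y z : teq x y -> teq (x ++ z) (y ++ z).
Proof. by move=> H; apply: teq_cat => //; apply: teq_refl. Qed.

Lemma teq_catr x y z : teq x y -> teq (z ++ x) (z ++ y).
Proof. by move=> H; apply: teq_cat => //; apply: teq_refl. Qed.

Lemma teq_cat0 x y : teq x [::] -> teq y [::] -> teq (x ++ y) [::].
Proof. exact: teq_cat. Qed.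

Lemma teq_all0 x : (forall p, List.In p x -> teq [:: p] [::]) -> teq x [::].
Proof.
elim: x => [|p x IH] H; first exact: teq_refl.
by rewrite -cat1s; apply: teq_cat0; [apply: H; left | apply: IH => q Hq; apply: H; right].
Qed.

Lemma teq_bigcat m (F F' : 'I_m -> fsum) : (forall i, teq (F i) (F' i)) ->
  teq (\big[cat/[::]]_(i < m) F i) (\big[cat/[::]]_(i < m) F' i).
Proof. by move=> H; elim/big_ind2: _ => //; [exact: teq_refl | move=> *; exact: teq_cat]. Qed.

Lemma teq_bigcat0 m (F : 'I_m -> fsum) :
  (forall i, teq (F i) [::]) -> teq (\big[cat/[::]]_(i < m) F i) [::].
Proof. by move=> H; elim/big_ind: _ => //; [exact: teq_refl | exact: teq_cat0]. Qed.

Lemma teq_bigcat_cat m (F F' : 'I_m -> fsum) :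
  teq ((\big[cat/[::]]_(i < m) F i) ++ \big[cat/[::]]_(i < m) F' i)
      (\big[cat/[::]]_(i < m) (F i ++ F' i)).
Proof.
elim: m F F' => [|m IH] F F'; first by rewrite !big_ord0; exact: teq_refl.
rewrite !big_ord_recr /=; set s := \big[cat/[::]]_(i < m) _; set s' := \big[cat/[::]]_(i < m) _.
apply: (teq_trans (y := (s ++ s') ++ (F ord_max ++ F' ord_max))); last first.
  exact/teq_catl/IH.
by rewrite -!catA; apply: teq_catr; rewrite !catA; apply/teq_catl/teq_swap.
Qed.

Lemma teq_addNr x : teq (fs_scale (-1) x ++ x) [::].
Proof.
elim: x => [|[c f] x IH] /=; first exact: teq_refl.
apply: (teq_trans (y := [:: (-1 * c, f); (c, f)] ++ (fs_scale (-1) x ++ x))).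
  rewrite -cat1s -[(c, f) :: x]cat1s -[[:: _; _]]/([:: (-1 * c, f)] ++ [:: (c, f)]) -!catA.
  by apply: teq_catr; rewrite !catA; apply/teq_catl/teq_swap.
apply: teq_cat0 IH; apply: teq_trans (teq_merge add scale P _ _ _) _.
by rewrite mulN1r addNr; exact: teq_zero.
Qed.

Lemma teq_addrN x : teq (x ++ fs_scale (-1) x) [::].
Proof. exact: teq_trans (teq_swap add scale P _ _) (teq_addNr x). Qed.

Lemma teq_subr0P x y : teq x y <-> teq (x ++ fs_scale (-1) y) [::].
Proof.
split=> [H|H]; first exact: teq_trans (teq_catl _ H) (teq_addrN y).
apply: (teq_trans (y := x ++ (fs_scale (-1) y ++ y))).
  by rewrite -{1}[x]cats0; apply/teq_catr/teq_sym/teq_addNr.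
by rewrite catA; exact: teq_catl H.
Qed.

Lemma teq_split x y : teq x (y ++ (x ++ fs_scale (-1) y)).
Proof.
apply: teq_sym; rewrite catA; apply: teq_trans (teq_catl _ (teq_swap add scale P _ _)) _.
by rewrite -catA -{2}[x]cats0; apply/teq_catr/teq_addrN.
Qed.

Lemma teq_collect (f : {ffun D -> V}) x : (forall p, List.In p x -> p.2 = f) ->
  teq x [:: (\sum_(p <- x) p.1, f)].
Proof.
elim: x => [|[c g] x IH] H /=; first by rewrite big_nil; apply/teq_sym/teq_zero.
have -> : g = f by apply: (H (c, g)); left.
rewrite big_cons /= -cat1s; apply: teq_trans (teq_catr _ (IH _)) _; last exact: teq_merge.
by move=> p Hp; apply: H; right.
Qed.

Lemma tupd_id (f : {ffun D -> V}) a : tupd f a (f a) = f.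
Proof. by apply/ffunP => b; rewrite ffunE; case: eqP => // ->. Qed.

Lemma teq_zero_factor c (f : {ffun D -> V}) a u :
  (forall b, b != a -> P (f b)) -> P u -> f a = scale 0 u -> teq [:: (c, f)] [::].
Proof.
move=> Pf Pu fa.
have -> : [:: (c, f)] = fs_scale c [:: (1, tupd f a (scale 0 u))] by rewrite /= mulr1 -fa tupd_id.
exact: (teq_scale c (teq_trans (teq_smul add scale 0 Pf Pu) (teq_zero add scale P _))).
Qed.

End FormalSums.

Section Evaluation.
Variables (k : fieldType) (V : Type) (add : V -> V -> V) (scale : k -> V -> V)
          (P : V -> Prop) (D : finType).
Local Notation fsum := (fsum k V D).

Definition fs_eval (psi : D -> V -> k) (x : fsum) : k :=
  \sum_(p <- x) p.1 * \prod_a psi a (p.2 a).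

Definition upd (psi : D -> V -> k) a (chi : V -> k) : D -> V -> k :=
  fun b => if b == a then chi else psi b.

Lemma upd_id (psi : D -> V -> k) a : upd psi a (psi a) = psi.
Proof. by apply: functional_extensionality_dep => b; rewrite /upd; case: eqP => // ->. Qed.

Lemma prod_tupd (psi : D -> V -> k) (f : {ffun D -> V}) a u :
  \prod_b psi b (tupd f a u b) = psi a u * \prod_(b | b != a) psi b (f b).
Proof.
rewrite (bigD1 a) //= ffunE eqxx; congr (_ * _).
by apply: eq_bigr => b /negPf nba; rewrite ffunE nba.
Qed.

Lemma prod_upd (psi : D -> V -> k) a chi (f : {ffun D -> V}) :
  \prod_b upd psi a chi b (f b) = chi (f a) * \prod_(b | b != a) psi b (f b).
Proof.
rewrite (bigD1 a) //= /upd eqxx; congr (_ * _).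
by apply: eq_bigr => b /negPf ->.
Qed.

Lemma fs_eval_cat psi x y : fs_eval psi (x ++ y) = fs_eval psi x + fs_eval psi y.
Proof. by rewrite /fs_eval big_cat. Qed.

Lemma fs_eval_scale psi c x : fs_eval psi (fs_scale c x) = c * fs_eval psi x.
Proof. by rewrite /fs_eval big_map mulr_sumr; apply: eq_bigr => p _; rewrite mulrA. Qed.

Lemma fs_eval_collect psi (f : {ffun D -> V}) x : (forall p, List.In p x -> p.2 = f) ->
  fs_eval psi x = (\sum_(p <- x) p.1) * \prod_a psi a (f a).
Proof.
rewrite /fs_eval big_distrl; elim: x => [|p x IH] H; first by rewrite !big_nil.
by rewrite !big_cons IH ?(H p) //; [left | move=> q Hq; apply: H; right].
Qed.

Lemma fs_eval_upd_comb (psi : D -> V -> k) a c chi1 chi2 x :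
  fs_eval (upd psi a (fun w => c * chi1 w + chi2 w)) x =
  c * fs_eval (upd psi a chi1) x + fs_eval (upd psi a chi2) x.
Proof.
rewrite /fs_eval mulr_sumr -big_split; apply: eq_bigr => p _ /=.
by rewrite !prod_upd; ring.
Qed.

Lemma fs_eval_map_tupd psi a (chi : V -> k) u (x : fsum) :
  fs_eval psi [seq (p.1 * chi (p.2 a), tupd p.2 a u) | p : k * {ffun D -> V} <- x] =
  psi a u * fs_eval (upd psi a chi) x.
Proof.
rewrite /fs_eval big_map mulr_sumr; apply: eq_bigr => p _ /=.
by rewrite prod_tupd prod_upd; ring.
Qed.

Lemma fs_eval_teq (psi : D -> V -> k) :
  (forall a u v, P u -> P v -> psi a (add u v) = psi a u + psi a v) ->
  (forall a c u, P u -> psi a (scale c u) = c * psi a u) ->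
  forall x y, teq add scale P x y -> fs_eval psi x = fs_eval psi y.
Proof.
move=> psiD psiZ x y; elim=> {x y}.
- by [].
- by move=> x y _ ->.
- by move=> x y z _ -> _ ->.
- by move=> x x' y y' _ E1 _ E2; rewrite !fs_eval_cat E1 E2.
- by move=> c x y _ E; rewrite !fs_eval_scale E.
- by move=> x y; rewrite !fs_eval_cat addrC.
- by move=> f; rewrite /fs_eval big_seq1 big_nil mul0r.
- by move=> c d f; rewrite /fs_eval !big_cons big_nil /= !addr0 mulrDl.
- move=> f a u v Pf Pu Pv; rewrite /fs_eval !big_cons !big_nil /= !addr0 !mul1r.
  by rewrite !prod_tupd psiD // mulrDl.
- by move=> f a c u Pf Pu; rewrite /fs_eval !big_seq1 /= !mul1r !prod_tupd psiZ // mulrA.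
Qed.

End Evaluation.

Section LinearForms.
Variables (k : fieldType) (A : lmodType k) (a : A).

Definition graph_form (B : A * k -> Prop) : Prop :=
  [/\ forall c p q, B p -> B q -> B (c *: p.1 + q.1, c * p.2 + q.2),
      forall x s t, B (x, s) -> B (x, t) -> s = t & B (a, 1)].

Lemma graph_form0 B : graph_form B -> B (0, 0).
Proof. by case=> BZ _ Ba; have := BZ (-1) _ _ Ba Ba; rewrite /= scaleN1r mulN1r !addNr. Qed.

Lemma graph_form_line : a != 0 -> graph_form (fun p => p.1 = p.2 *: a).
Proof.
move=> a0; split=> /=; last by rewrite scale1r.
  by move=> c [x s] [y t] /= -> ->; rewrite scalerDl scalerA.
move=> x s t -> /eqP; rewrite -subr_eq0 -scalerBl scaler_eq0 (negbTE a0) orbF subr_eq0.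
by move/eqP.
Qed.

Lemma graph_form_bigcup (F : (A * k -> Prop) -> Prop) :
  (forall B p, F B -> B p -> graph_form B) -> (exists2 B, F B & exists p, B p) ->
  (forall B B', F B -> F B' -> (forall p, B p -> B' p) \/ (forall p, B' p -> B p)) ->
  graph_form (fun p => exists2 B, F B & B p).
Proof.
move=> FG [B0 FB0 [p0 B0p0]] Ftot.
have common p q : (exists2 B, F B & B p) -> (exists2 B, F B & B q) ->
    exists2 B, F B & B p /\ B q.
  move=> [B FB Bp] [B' FB' B'q].
  by case: (Ftot B B' FB FB') => sub; [exists B' | exists B] => //; split=> //; apply: sub.
split.
- move=> c p q Hp Hq; have [B FB [Bp Bq]] := common p q Hp Hq.
  by exists B => //; have [BZ _ _] := FG B p FB Bp; apply: BZ.
- move=> x s t Hs Ht; have [B FB [Bs Bt]] := common _ _ Hs Ht.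
  by have [_ Bfun _] := FG B _ FB Bs; apply: Bfun Bs Bt.
- by exists B0 => //; have [_ _ Ba] := FG B0 p0 FB0 B0p0.
Qed.

Lemma graph_form_extend B v : graph_form B -> ~ (exists s, B (v, s)) ->
  graph_form (fun p => exists x s c, B (x, s) /\ p = (x + c *: v, s)).
Proof.
move=> GB nv; have [BZ Bfun Ba] := GB; split.
- move=> c _ _ [x1 [s1 [c1 [H1 ->]]]] [x2 [s2 [c2 [H2 ->]]]] /=.
  exists (c *: x1 + x2), (c * s1 + s2), (c * c1 + c2); split; first exact: BZ H1 H2.
  by congr (_, _); rewrite scalerDr scalerDl scalerA addrACA.
- move=> y t1 t2 [x1 [s1 [c1 [H1 [e1 ->]]]]] [x2 [s2 [c2 [H2 [e2 ->]]]]].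
  have ee : x1 + c1 *: v = x2 + c2 *: v by rewrite -e1 -e2.
  have [ec|nc] := eqVneq c1 c2.
    by move: ee; rewrite ec => /addIr ex; apply: Bfun H2; rewrite -ex.
  exfalso; apply: nv; exists ((c2 - c1)^-1 * (s1 - s2) + 0).
  have ev : v = (c2 - c1)^-1 *: (x1 - x2) + 0.
    have nc' : c2 - c1 != 0 by rewrite subr_eq0 eq_sym.
    apply: (scalerI nc'); rewrite addr0 scalerA mulfV // scale1r scalerBl.
    by rewrite -[x1](addrK (c1 *: v)) ee addrAC [x2 + _]addrC addrK.
  rewrite ev; apply: (BZ _ (x1 - x2, s1 - s2) (0, 0)) (graph_form0 GB).
  by have := BZ (-1) _ _ H2 H1; rewrite /= scaleN1r mulN1r ![- _ + _]addrC.
- by exists a, 1, 0; rewrite scale0r addr0.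
Qed.

Lemma exists_maximal_graph_form : a != 0 -> exists2 B, graph_form B &
  forall B', graph_form B' -> (forall p, B p -> B' p) -> forall p, B' p -> B p.
Proof.
move=> a0; pose P B := (forall p, ~ B p) \/ graph_form B.
have [B [PB maxB]] : exists B, P B /\ forall B', classical_sets.proper B B' -> ~ P B'.
  apply: classical_sets.Zorn_bigcup => F FP Ftot.
  have [nonempty|nF] := pselect (exists2 X, F X & exists p, X p); last first.
    by left=> p [X FX Xp]; apply: nF; exists X => //; exists p.
  right; apply: graph_form_bigcup nonempty Ftot.
  by move=> Y p /FP [/(_ p)|].
have maxP B' : graph_form B' -> (forall p, B p -> B' p) -> forall p, B' p -> B p.
  move=> GB' sub p B'p; apply: contrapT => nBp.
  by apply: (maxB B'); [split=> // /(_ p B'p) | right].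
case: PB => [B0|GB]; last by exists B.
have sub p : B p -> p.1 = p.2 *: a by move/B0.
by have /B0 := maxP _ (graph_form_line a0) sub (a, 1) (esym (scale1r a)).
Qed.

Lemma exists_lin_form : a != 0 -> exists2 phi : A -> k, linear_for *%R phi & phi a = 1.
Proof.
move=> a0; have [B GB maxB] := exists_maximal_graph_form a0; have [BZ Bfun Ba] := GB.
have total v : exists s, B (v, s).
  apply: contrapT => nv; apply: (nv); exists 0; apply: (maxB _ (graph_form_extend GB nv)).
    by move=> [x s] Bxs; exists x, s, 0; rewrite scale0r addr0.
  by exists 0, 0, 1; rewrite add0r scale1r; split=> //; exact: graph_form0.
pose phi v := projT1 (cid (total v)).
have Bphi v : B (v, phi v) := projT2 (cid (total v)).
exists phi; last exact: Bfun (Bphi a) Ba.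
by move=> c x y; apply: Bfun (Bphi _) (BZ c _ _ (Bphi x) (Bphi y)).
Qed.

Lemma lin_form0 (phi : A -> k) : linear_for *%R phi -> phi 0 = 0.
Proof.
move=> lphi; have := lphi 1 0 0; rewrite scale1r addr0 mul1r.
by move/(congr1 (fun t => t - phi 0)); rewrite addrK subrr => <-.
Qed.

Lemma lin_formD (phi : A -> k) u v : linear_for *%R phi -> phi (u + v) = phi u + phi v.
Proof. by move=> lphi; rewrite -[u]scale1r lphi mul1r scale1r. Qed.

Lemma lin_formZ (phi : A -> k) c u : linear_for *%R phi -> phi (c *: u) = c * phi u.
Proof. by move=> lphi; rewrite -[c *: u]addr0 lphi (lin_form0 lphi) addr0. Qed.

End LinearForms.

Section OrderedGroup.
Variables (G : zmodType) (le : rel G) (Hle : ordered_group le).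

Lemma le_add2r a b c : le (a + c) (b + c) = le a b.
Proof.
apply/idP/idP; last exact: og_add.
by move/(og_add Hle (-c)); rewrite !addrK.
Qed.

Lemma le_subr_ge0 c x : le 0 (x - c) = le c x.
Proof. by rewrite -(le_add2r _ _ c) subrK add0r. Qed.

Lemma le_addr_ge0 a b : le 0 a -> le 0 b -> le 0 (a + b).
Proof. by move=> a0 b0; apply: (og_trans Hle b0); rewrite -{1}[b]add0r le_add2r. Qed.

Lemma well_ordered_sub (S S' : G -> Prop) :
  well_ordered le S -> (forall x, S' x -> S x) -> well_ordered le S'.
Proof. by move=> W sub T TS; apply: W => x /TS /sub. Qed.

Lemma well_ordered_union (S1 S2 : G -> Prop) : well_ordered le S1 -> well_ordered le S2 ->
  well_ordered le (fun x => S1 x \/ S2 x).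
Proof.
move=> W1 W2 T TS [x0 Tx0].
have least (S : G -> Prop) : well_ordered le S -> (exists x, T x /\ S x) ->
    exists2 m, T m & forall y, T y -> S y -> le m y.
  move=> W ne; have [m [Tm _] Mm] := W _ (fun x => @proj2 _ _) ne.
  by exists m => // y Ty Sy; apply: Mm.
have [[x1 H1]|n1] := pselect (exists x, T x /\ S1 x);
have [[x2 H2]|n2] := pselect (exists x, T x /\ S2 x).
- have [m1 T1 M1] := least _ W1 (ex_intro _ x1 H1).
  have [m2 T2 M2] := least _ W2 (ex_intro _ x2 H2).
  have [L|L] := orP (og_total Hle m1 m2).
    exists m1 => // y Ty; case: (TS y Ty) => Sy; first exact: M1.
    exact: (og_trans Hle L (M2 _ Ty Sy)).
  exists m2 => // y Ty; case: (TS y Ty) => Sy; last exact: M2.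
  exact: (og_trans Hle L (M1 _ Ty Sy)).
- have [m1 T1 M1] := least _ W1 (ex_intro _ x1 H1).
  by exists m1 => // y Ty; case: (TS y Ty) => Sy; [exact: M1 | case: n2; exists y].
- have [m2 T2 M2] := least _ W2 (ex_intro _ x2 H2).
  by exists m2 => // y Ty; case: (TS y Ty) => Sy; [case: n1; exists y | exact: M2].
- by case: (TS x0 Tx0) => S; [case: n1 | case: n2]; exists x0.
Qed.

Lemma well_ordered_bigunion T (S : T -> G -> Prop) (l : seq T) :
  (forall t, List.In t l -> well_ordered le (S t)) ->
  well_ordered le (fun x => exists t, List.In t l /\ S t x).
Proof.
elim: l => [|t l IH] W; first by move=> X XS [x /XS [? []]].
apply: well_ordered_sub (well_ordered_union (W t (or_introl erefl)) (IH _)) _.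
  by move=> u ul; apply: W; right.
by move=> x [u [[<-|ul] Sux]]; [left | right; exists u].
Qed.

Lemma well_ordered_translate (S : G -> Prop) c :
  well_ordered le S -> well_ordered le (fun y => S (y + c)).
Proof.
move=> W T TS [y0 Ty0].
have TS' x : T (x - c) -> S x by move/TS; rewrite subrK.
have [|m Tm Mm] := W _ TS'; first by exists (y0 + c); rewrite addrK.
by exists (m - c) => // y Ty; rewrite -(le_add2r _ _ c) subrK; apply: Mm; rewrite addrK.
Qed.

End OrderedGroup.

Section HahnSeries.
Variables (k : fieldType) (A : lalgType k) (G : zmodType) (le : rel G) (Hle : ordered_group le).
Local Notation hahn := (@hahn1 G le A).

Lemma hahn1_subsupport (f g : G -> A) : hahn f -> (forall x, g x != 0 -> f x != 0) -> hahn g.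
Proof.
move=> [fpos fwo] gf; split=> [x /gf /fpos //|d d0].
by apply: well_ordered_sub (fwo d d0) _ => x [? [? /gf]].
Qed.

Lemma hahn1_0 : hahn (fun _ => 0).
Proof.
split=> [x /eqP //|d _].
by move=> T /(_ _) TS [x /TS [_ [_ /eqP]]].
Qed.

Lemma hahn1_add (u v : G -> A) : hahn u -> hahn v -> hahn (fun x => u x + v x).
Proof.
have supp x : u x + v x != 0 -> u x != 0 \/ v x != 0.
  by case: (eqVneq (u x) 0) => [->|]; [rewrite add0r; right | left].
move=> [upos uwo] [vpos vwo]; split=> [x /supp [/upos|/vpos] //|d d0].
apply: well_ordered_sub (well_ordered_union Hle (uwo d d0) (vwo d d0)) _.
by move=> x [L [L0 /supp [] nz]]; [left | right].
Qed.

Lemma hahn1_scale c (u : G -> A) : hahn u -> hahn (fun x => c *: u x).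
Proof. by move=> hu; apply: hahn1_subsupport hu _ => x; rewrite scaler_eq0 negb_or => /andP[]. Qed.

Lemma hahn1_sum r (lam : 'I_r -> k) (e : 'I_r -> G -> A) :
  (forall i, hahn (e i)) -> hahn (fun x => \sum_(i < r) lam i *: e i x).
Proof.
elim: r lam e => [|r IH] lam e he.
  by apply: hahn1_subsupport hahn1_0 _ => x; rewrite big_ord0.
have := IH (fun i => lam (widen_ord (leqnSn r) i)) (fun i => e (widen_ord (leqnSn r) i))
  (fun i => he _).
move/hahn1_add/(_ (hahn1_scale (lam ord_max) (he ord_max)))/hahn1_subsupport; apply.
by move=> x; rewrite big_ord_recr.
Qed.

Lemma hahn1_restrict c (f : G -> A) : hahn f -> hahn (fun x => if le c x then f x else 0).
Proof. by move=> hf; apply: hahn1_subsupport hf _ => x; case: (le c x); rewrite ?eqxx. Qed.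

Lemma hahn1_unshift c (f : G -> A) : le 0 c -> hahn f ->
  hahn (fun x => if le 0 x then f (x + c) else 0).
Proof.
move=> c0 [fpos fwo]; split=> [x|d d0]; first by case: (le 0 x); rewrite ?eqxx.
apply: well_ordered_sub (well_ordered_translate Hle (c := c) (fwo _ (le_addr_ge0 Hle d0 c0))) _.
move=> x [L [L0 nz]] /=; rewrite L0 in nz.
by rewrite le_add2r //; split=> //; split=> //; exact: le_addr_ge0.
Qed.

End HahnSeries.

Section CoefForms.
Variables (k : fieldType) (A : lmodType k) (G : Type).

Inductive coef_form : ((G -> A) -> k) -> Prop :=
| coef_form_read x (phi : A -> k) : linear_for *%R phi -> coef_form (fun w => phi (w x))
| coef_form_comb c psi1 psi2 : coef_form psi1 -> coef_form psi2 ->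
    coef_form (fun w => c * psi1 w + psi2 w).

Lemma coef_form0 psi : coef_form psi -> psi (fun _ => 0) = 0.
Proof. by elim=> [x phi /lin_form0 | c p1 p2 _ -> _ ->] //; rewrite mulr0 addr0. Qed.

Lemma coef_formD psi (u v : G -> A) :
  coef_form psi -> psi (fun x => u x + v x) = psi u + psi v.
Proof. by elim=> [x phi /lin_formD | c p1 p2 _ -> _ ->] //; ring. Qed.

Lemma coef_formZ psi c (u : G -> A) : coef_form psi -> psi (fun x => c *: u x) = c * psi u.
Proof. by elim=> [x phi /lin_formZ | c' p1 p2 _ -> _ ->] //; ring. Qed.

Lemma coef_form_sum psi r (c : 'I_r -> k) (e : 'I_r -> G -> A) : coef_form psi ->
  psi (fun x => \sum_(j < r) c j *: e j x) = \sum_(j < r) c j * psi (e j).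
Proof.
move=> cf; elim: r c e => [|r IH] c e.
  by rewrite big_ord0 -(coef_form0 cf); congr psi; apply: funext => x; rewrite big_ord0.
rewrite big_ord_recr /= -(IH (fun j => c (widen_ord _ j)) (fun j => e (widen_ord _ j))).
rewrite -(coef_formZ _ _ cf) -(coef_formD _ _ cf); congr psi.
by apply: funext => x; rewrite big_ord_recr.
Qed.

Lemma coef_form_span r (c : 'I_r -> k) (q : 'I_r -> (G -> A) -> k) psi :
  (forall i, coef_form (q i)) -> coef_form psi ->
  coef_form (fun w => \sum_(i < r) c i * q i w + psi w).
Proof.
move=> cq cf; elim: r c q cq => [|r IH] c q cq.
  by under eq_fun do rewrite big_ord0 add0r.
under eq_fun do rewrite big_ord_recr /= addrAC addrC.
exact/coef_form_comb/IH.
Qed.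

Lemma coef_form_sep (w : G -> A) x : w x != 0 -> exists2 psi, coef_form psi & psi w = 1.
Proof.
move=> /exists_lin_form [phi lphi phi1].
by exists (fun v => phi (v x)); first exact: coef_form_read.
Qed.

End CoefForms.

Section Iota.
Variables (k : fieldType) (A : comAlgType k) (G : zmodType) (le : rel G) (D : finType).
Local Notation tH := (tH A G D).

Lemma iota0_cat (x y : tH) g : iota0 (x ++ y) g = iota0 x g ++ iota0 y g.
Proof. exact: map_cat. Qed.

Lemma iota0_scale c (x : tH) g : iota0 (fs_scale c x) g = fs_scale c (iota0 x g).
Proof. by rewrite /iota0 /fs_scale -!map_comp. Qed.

Lemma iota0_bigcat m (F : 'I_m -> tH) g :
  iota0 (\big[cat/[::]]_(i < m) F i) g = \big[cat/[::]]_(i < m) iota0 (F i) g.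
Proof. exact: (big_morph _ (fun x y => iota0_cat x y g)). Qed.

Lemma iota0_tupd (f : {ffun D -> G -> A}) a u (g : {ffun D -> G}) :
  [ffun b => tupd f a u b (g b)] = tupd [ffun b => f b (g b)] a (u (g a)).
Proof. by apply/ffunP => b; rewrite !ffunE; case: eqP => // ->. Qed.

Lemma iota0_teq (x y : tH) : teqH le x y -> forall g, teqA (iota0 x g) (iota0 y g).
Proof.
elim=> {x y} [x|x y _ IH|x y z _ IH1 _ IH2|x x' y y' _ IH1 _ IH2|c x y _ IH|x y|f|c d f|
              f a u v _ _ _|f a c u _ _] g.
- exact: teq_refl.
- exact: teq_sym (IH g).
- exact: teq_trans (IH1 g) (IH2 g).
- by rewrite !iota0_cat; apply: teq_cat (IH1 g) (IH2 g).
- by rewrite !iota0_scale; apply: teq_scale (IH g).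
- by rewrite !iota0_cat; apply: teq_swap.
- exact: teq_zero.
- exact: teq_merge.
- by rewrite /iota0 /= !iota0_tupd; apply: teq_add.
- by rewrite /iota0 /= !iota0_tupd; apply: teq_smul.
Qed.

Lemma fs_eval_teqA (phi : D -> A -> k) (u v : tA A D) :
  (forall a, linear_for *%R (phi a)) -> teqA u v -> fs_eval phi u = fs_eval phi v.
Proof.
by move=> lphi; apply: fs_eval_teq => [a x y _ _ | a c x _]; [apply: lin_formD | apply: lin_formZ].
Qed.

Lemma fs_eval_iota0 (phi : D -> A -> k) (g : {ffun D -> G}) (z : tH) :
  fs_eval (fun a w => phi a (w (g a))) z = fs_eval phi (iota0 z g).
Proof.
rewrite /fs_eval /iota0 big_map; apply: eq_bigr => p _ /=.
by congr (_ * _); apply: eq_bigr => a _; rewrite ffunE.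
Qed.

Definition coef_reading (chi : (G -> A) -> k) :=
  exists xphi : G * (A -> k), linear_for *%R xphi.2 /\ chi = fun w => xphi.2 (w xphi.1).

(* Coefficient forms are linear combinations of readings, and [fs_eval] is
   multilinear in the family of forms, so it suffices to treat families of
   readings; those are exactly linear forms evaluated on [iota0 z]. *)
Lemma fs_eval_coef_forms_eq0 (z : tH) :
  (forall phi, (forall a, linear_for *%R (phi a)) -> forall g, fs_eval phi (iota0 z g) = 0) ->
  forall psi, (forall a, coef_form (psi a)) -> fs_eval psi z = 0.
Proof.
move=> iota0z0.
suff: forall s : seq D, forall psi, (forall a, coef_form (psi a)) ->
    (forall a, a \notin s -> coef_reading (psi a)) -> fs_eval psi z = 0.
  by move=> H psi cpsi; apply: (H (enum D)) => // a; rewrite mem_enum.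
elim=> [|a s IH] psi cpsi read.
  have X b := cid (read b isT).
  have -> : psi = fun b w => (projT1 (X b)).2 (w ([ffun b => (projT1 (X b)).1] b)).
    apply: functional_extensionality_dep => b; rewrite ffunE.
    by case: (projT2 (X b)).
  rewrite (fs_eval_iota0 (fun b => (projT1 (X b)).2)).
  by apply: iota0z0 => b; case: (projT2 (X b)).
rewrite -(upd_id psi a); elim: (cpsi a) => [x phi lphi|c p1 p2 _ IH1 _ IH2].
  apply: IH => [b|b bs]; rewrite /upd; case: eqP => [_|/eqP nba].
  - exact: coef_form_read.
  - exact: cpsi.
  - by exists (x, phi).
  - by apply: read; rewrite inE negb_or nba.
by rewrite fs_eval_upd_comb IH1 IH2 mulr0 addr0.
Qed.

End Iota.

Definition ord_cons T r (x : T) (f : 'I_r -> T) (i : 'I_r.+1) : T :=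
  if unlift ord0 i is Some j then f j else x.

Section DualBasis.
Variables (k : fieldType) (A : lalgType k) (G : zmodType) (le : rel G) (Hle : ordered_group le).
Local Notation hahn := (@hahn1 G le A).

Lemma sum_mul_delta r (c : 'I_r -> k) i : \sum_j c j * (i == j)%:R = c i.
Proof.
rewrite (bigD1 i) //= eqxx mulr1 big1 ?addr0 // => j.
by rewrite eq_sym => /negPf ->; rewrite mulr0.
Qed.

Definition dual_basis r (e : 'I_r -> G -> A) (psi : 'I_r -> (G -> A) -> k) (ws : seq (G -> A)) :=
  [/\ forall i, hahn (e i), forall i, coef_form (psi i),
      forall i j, psi i (e j) = (i == j)%:R
    & forall w, List.In w ws -> w = fun x => \sum_i psi i w *: e i x].

Lemma biorthogonal_coord r (e : 'I_r -> G -> A) (psi : 'I_r -> (G -> A) -> k) (c : 'I_r -> k) i :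
  coef_form (psi i) -> (forall j, psi i (e j) = (i == j)%:R) ->
  psi i (fun x => \sum_j c j *: e j x) = c i.
Proof.
move=> cpsi biorth; rewrite coef_form_sum //.
by under eq_bigr do rewrite biorth; exact: sum_mul_delta.
Qed.

Lemma sum_ord_cons r (c0 : k) (c : 'I_r -> k) (u : G -> A) (e : 'I_r -> G -> A) x :
  \sum_i ord_cons c0 c i *: ord_cons u e i x = c0 *: u x + \sum_j c j *: e j x.
Proof. by rewrite big_ord_recl /ord_cons unlift_none; under eq_bigr do rewrite liftK. Qed.

Lemma dual_basis_extend r (e : 'I_r -> G -> A) psi ws u psin w :
  hahn u -> coef_form psin -> (forall i, psi i u = 0) -> (forall j, psin (e j) = 0) ->
  psin u = 1 -> dual_basis e psi ws -> w = (fun x => u x + \sum_j psi j w *: e j x) ->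
  dual_basis (ord_cons u e) (ord_cons psin psi) (w :: ws).
Proof.
move=> hu cpsin psi_u psin_e psin_u [he cpsi biorth span] wE.
have cpsi' i : coef_form (ord_cons psin psi i) by rewrite /ord_cons; case: (unlift ord0 i).
have biorth' i j : ord_cons psin psi i (ord_cons u e j) = (i == j)%:R.
  rewrite /ord_cons; case: (unliftP ord0 i) => [i' ->|->]; case: (unliftP ord0 j) => [j' ->|->].
  - by rewrite biorth (inj_eq (@lift_inj _ ord0)).
  - by rewrite psi_u eq_sym (negbTE (neq_lift _ _)).
  - by rewrite psin_e (negbTE (neq_lift _ _)).
  - by rewrite psin_u eqxx.
have coord w' c0 c : w' = (fun x => c0 *: u x + \sum_j c j *: e j x) ->
    w' = fun x => \sum_i ord_cons psin psi i w' *: ord_cons u e i x.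
  under [X in _ = X -> _]eq_fun do rewrite -sum_ord_cons.
  by move=> ->; apply: funext => x; apply: eq_bigr => i _; rewrite biorthogonal_coord.
split=> // [i|w' [<-|/span w'E]]; first by rewrite /ord_cons; case: (unlift ord0 i).
  by apply: (coord _ 1 (fun j => psi j w)); under eq_fun do rewrite scale1r; exact: wE.
apply: (coord _ 0 (fun j => psi j w')); rewrite {1}w'E.
by apply: funext => x; rewrite scale0r add0r.
Qed.

Lemma dual_basis_cons r (e : 'I_r -> G -> A) psi ws w : hahn w -> dual_basis e psi ws ->
  exists r' (e' : 'I_r' -> G -> A) psi', dual_basis e' psi' (w :: ws).
Proof.
move=> hw dual; have [he cpsi biorth span] := dual.
pose u x := \sum_j (- psi j w) *: e j x + w x.
have wE x : w x = u x + \sum_j psi j w *: e j x.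
  by rewrite /u addrC addrA -big_split big1 ?add0r // => j _ /=; rewrite scaleNr addrN.
have psi_u i : psi i u = 0 by rewrite coef_formD // biorthogonal_coord // addNr.
have [[x0 ux0]|u0] := pselect (exists x, u x != 0); last first.
  exists r, e, psi; split=> // w' [<-|/span //]; apply: funext => x.
  rewrite wE (_ : u x = 0) ?add0r //.
  by apply: contrapT => /eqP nz; apply: u0; exists x.
have [psi0 cpsi0 psi0u] := coef_form_sep ux0.
pose psin v := \sum_j (- psi0 (e j)) * psi j v + psi0 v.
have psin_e j : psin (e j) = 0.
  rewrite /psin (eq_bigr (fun i => - psi0 (e i) * (j == i)%:R)); last first.
    by move=> i _; rewrite biorth eq_sym.
  by rewrite sum_mul_delta addNr.
have psin_u : psin u = 1 by rewrite /psin big1 ?add0r // => j _; rewrite psi_u mulr0.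
exists r.+1, (ord_cons u e), (ord_cons psin psi).
apply: dual_basis_extend psin_e psin_u dual _ => //; last exact: funext.
  by apply: (hahn1_add Hle _ hw); apply: hahn1_sum.
exact: coef_form_span.
Qed.

Lemma exists_dual_basis (ws : seq (G -> A)) : (forall w, List.In w ws -> hahn w) ->
  exists r (e : 'I_r -> G -> A) psi, dual_basis e psi ws.
Proof.
elim: ws => [|w ws IH] hws.
  by exists 0%N, (fun _ _ => 0), (fun _ _ => 0); split=> [[]|[]|[]|].
have [r [e [psi dual]]] := IH (fun w' Hw' => hws w' (or_intror Hw')).
exact: dual_basis_cons (hws w (or_introl erefl)) dual.
Qed.

End DualBasis.

Section Injectivity.
Variables (k : fieldType) (A : comAlgType k) (G : zmodType) (le : rel G) (Hle : ordered_group le)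
          (D : finType).
Local Notation hahn := (@hahn1 G le A).
Local Notation tH := (tH A G D).
Local Notation elt := (k * {ffun D -> G -> A})%type.
Local Notation TH := (@teqH k A G le D).

Lemma teqH_expand c (f : {ffun D -> G -> A}) a r (lam : 'I_r -> k) (e : 'I_r -> G -> A) :
  (forall b, b != a -> hahn (f b)) -> (forall i, hahn (e i)) ->
  TH [:: (c, tupd f a (fun x => \sum_i lam i *: e i x))]
     (\big[cat/[::]]_(i < r) [:: (c * lam i, tupd f a (e i))]).
Proof.
move=> hf; elim: r lam e => [|r IH] lam e he.
  rewrite big_ord0; apply: (teq_zero_factor (@hadd k A G) c (a := a) (u := fun _ => 0)).
  - by move=> b nb; rewrite ffunE (negbTE nb); apply: hf.
  - exact: hahn1_0.
  - by apply: funext => x; rewrite ffunE eqxx big_ord0 /hscale scaler0.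
pose lam' i := lam (widen_ord (leqnSn r) i); pose e' i := e (widen_ord (leqnSn r) i).
have he' i : hahn (e' i) by apply: he.
have add_step := teq_scale c (teq_add (@hadd k A G) (@hscale k A G) hf
  (hahn1_sum Hle lam' he') (hahn1_scale (lam ord_max) (he ord_max))).
have smul_step :=
  teq_scale c (teq_smul (@hadd k A G) (@hscale k A G) (lam ord_max) hf (he ord_max)).
rewrite /= mulr1 in add_step smul_step.
have -> : (fun x => \sum_(i < r.+1) lam i *: e i x) =
    @hadd k A G (fun x => \sum_i lam' i *: e' i x) (@hscale k A G (lam ord_max) (e ord_max)).
  by apply: funext => x; rewrite big_ord_recr.
rewrite big_ord_recr /=; apply: teq_trans add_step _.
by rewrite -cat1s; apply: teq_cat (IH lam' e' he') smul_step.
Qed.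

Lemma teqH_expand_factor a r (e : 'I_r -> G -> A) (psi : 'I_r -> (G -> A) -> k) (z : tH) :
  (forall i, hahn (e i)) -> all_in hahn z ->
  (forall p, List.In p z -> p.2 a = fun x => \sum_i psi i (p.2 a) *: e i x) ->
  TH z (\big[cat/[::]]_(i < r) [seq (p.1 * psi i (p.2 a), tupd p.2 a (e i)) | p : elt <- z]).
Proof.
move=> he; elim: z => [|[c f] z IH] hz span /=; first by rewrite big1_eq; exact: teq_refl.
have head : TH [:: (c, f)] (\big[cat/[::]]_(i < r) [:: (c * psi i (f a), tupd f a (e i))]).
  have := @teqH_expand c f a r (fun i => psi i (f a)) e
    (fun b _ => hz (c, f) (or_introl erefl) b) he.
  by rewrite -(span (c, f) (or_introl erefl)) tupd_id.
have tail := IH (fun q Hq => hz q (or_intror Hq)) (fun q Hq => span q (or_intror Hq)).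
by rewrite -cat1s; apply: teq_trans (teq_cat head tail) (teq_bigcat_cat _ _ _ _ _).
Qed.

Definition uniform_on (S : {set D}) (z : tH) :=
  forall p q, List.In p z -> List.In q z -> forall a, a \in S -> p.2 a = q.2 a.

Definition coef_forms_vanish (z : tH) :=
  forall psi : D -> (G -> A) -> k, (forall a, coef_form (psi a)) -> fs_eval psi z = 0.

Lemma teqH_eq0_uniform (z : tH) :
  all_in hahn z -> uniform_on setT z -> coef_forms_vanish z -> TH z [::].
Proof.
case: z => [|p0 z] hz unif van; first exact: teq_refl.
set f := p0.2.
have samef p : List.In p (p0 :: z) -> p.2 = f.
  by move=> Hp; apply/ffunP => a; apply: unif; [| left |].
apply: teq_trans (teq_collect _ _ _ samef) _.
have [[a fa0]|nz] := pselect (exists a, forall x, f a x = 0).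
  apply: (teq_zero_factor (@hadd k A G) _ (a := a) (u := fun _ => 0)).
  - by move=> b _; exact: (hz p0 (or_introl erefl)).
  - exact: hahn1_0.
  - by apply: funext => x; rewrite fa0 /hscale scaler0.
have sep a : exists psi, coef_form psi /\ psi (f a) = 1.
  have [x /eqP fax] : exists x, f a x <> 0 by apply/existsNP => fa0; apply: nz; exists a.
  by have [psi cpsi psi1] := coef_form_sep fax; exists psi.
pose psi a := projT1 (cid (sep a)).
have psi_f1 : \prod_a psi a (f a) = 1 by apply: big1 => a _; case: (projT2 (cid (sep a))).
have := van psi (fun a => proj1 (projT2 (cid (sep a)))).
by rewrite (fs_eval_collect _ samef) psi_f1 mulr1 => ->; apply: teq_zero.
Qed.

(* Expanding the first non-uniform factor in a dual basis splits [z] into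
   pieces that are uniform on one more position and still killed by all
   coefficient forms. *)
Lemma teqH_eq0_uniform_on n (S : {set D}) (z : tH) : #|~: S| = n ->
  all_in hahn z -> uniform_on S z -> coef_forms_vanish z -> TH z [::].
Proof.
elim: n S z => [|n IH] S z cS hz unif van.
  apply: teqH_eq0_uniform => // p q Hp Hq a _; apply: unif => //.
  by move/cards0_eq/setP: cS => /(_ a); rewrite !inE => /negbFE.
have [a0 a0S] : exists a0, a0 \in ~: S by apply/set0Pn; rewrite -card_gt0 cS.
have cS' : #|~: (a0 |: S)| = n.
  have := cardsD1 a0 (~: S); rewrite a0S cS add1n => -[->].
  by apply: eq_card => b; rewrite !inE; case: (b == a0).
have hw w : List.In w [seq p.2 a0 | p : elt <- z] -> hahn w.
  by move=> /List.in_map_iff [p [<- Hp]]; apply: hz.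
have [r [e [psi [he cpsi biorth span]]]] := exists_dual_basis Hle hw.
apply: teq_trans (teqH_expand_factor he hz _) _.
  by move=> p Hp; apply: span; apply/List.in_map_iff; exists p.
apply: teq_bigcat0 => i; apply: (IH (a0 |: S)) => //.
- move=> _ /List.in_map_iff [p [<- Hp]] b /=; rewrite ffunE.
  by case: eqP => _; [exact: he | exact: hz].
- move=> _ _ /List.in_map_iff [p [<- Hp]] /List.in_map_iff [q [<- Hq]] b /=.
  by rewrite !ffunE !inE; case: eqP => //= _; apply: unif.
- move=> chi cchi; rewrite fs_eval_map_tupd van ?mulr0 // => b.
  by rewrite /upd; case: eqP.
Qed.

Lemma teqH_eq0 (z : tH) : all_in hahn z -> coef_forms_vanish z -> TH z [::].
Proof.
move=> hz van; apply: (teqH_eq0_uniform_on (S := set0) erefl) => // p q _ _ a.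
by rewrite inE.
Qed.

Theorem iota0_inj (x y : tH) : tH_in le x -> tH_in le y ->
  (forall g, teqA (iota0 x g) (iota0 y g)) -> TH x y.
Proof.
move=> /fs_inP hx /fs_inP hy xy; apply/teq_subr0P/teqH_eq0.
  exact: all_in_cat hx (all_in_scale hy).
apply: fs_eval_coef_forms_eq0 => phi lphi g.
rewrite iota0_cat iota0_scale fs_eval_cat fs_eval_scale (fs_eval_teqA lphi (xy g)).
by rewrite mulN1r addrN.
Qed.

End Injectivity.

Section Ideals.
Variables (k : fieldType) (A : comAlgType k) (G : zmodType) (le : rel G) (Hle : ordered_group le)
          (D : finType).
Local Notation hahn := (@hahn1 G le A).
Local Notation tH := (tH A G D).
Local Notation elt := (k * {ffun D -> G -> A})%type.
Local Notation TH := (@teqH k A G le D).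
Local Notation TA := (@teqA k A D).

Lemma teqA_zero_factor (p : k * {ffun D -> A}) a : p.2 a = 0 -> TA [:: p] [::].
Proof.
case: p => c f /= fa0.
by apply: (teq_zero_factor _ c (a := a) (u := 0)) => //; rewrite fa0 scaler0.
Qed.

Lemma mlePn (g d : {ffun D -> G}) : ~~ mle le g d -> exists a, ~~ le (g a) (d a).
Proof. by rewrite negb_forall => /existsP. Qed.

Lemma iota0_mul_mono (g : {ffun D -> G}) (z : tH) d :
  TA (iota0 (tH_mul_mono le g z) d) (if mle le g d then iota0 z (msub d g) else [::]).
Proof.
case: ifP => [gd | /negbT /mlePn [a gda]].
  suff -> : iota0 (tH_mul_mono le g z) d = iota0 z (msub d g) by exact: teq_refl.
  rewrite /iota0 /tH_mul_mono -map_comp; apply: eq_map => p /=; congr (_, _).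
  by apply/ffunP => a; rewrite !ffunE /shift1 (forallP gd a).
apply: teq_all0 => _ /List.in_map_iff [_ [<- /List.in_map_iff [p [<- _]]]].
by apply: (teqA_zero_factor (a := a)); rewrite /= !ffunE /shift1 (negbTE gda).
Qed.

Lemma iota0_tseries_ok (z : tH) : all_in hahn z -> tseries_ok le (iota0 z).
Proof.
have iota0_eq0 (g : {ffun D -> G}) a :
    (forall p, List.In p z -> p.2 a (g a) = 0) -> TA (iota0 z g) [::].
  move=> z0; apply: teq_all0 => _ /List.in_map_iff [p [<- Hp]].
  by apply: (teqA_zero_factor (a := a)); rewrite /= ffunE z0.
move=> hz; split=> [g nz a|d d0 a].
  apply: contrapT => ga; apply: nz; apply: (iota0_eq0 _ a) => p /hz /(_ a) [pos _].
  by apply: contrapT => /eqP /pos.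
apply: well_ordered_sub (well_ordered_bigunion Hle (l := z)
  (fun p Hp => proj2 (hz p Hp a) _ (d0 a))) _ => x [xd [g [gax _ nz]]].
have [[p Hp pax]|] := pselect (exists2 p, List.In p z & p.2 a x != 0); last first.
  move=> nx; case: nz; apply: (iota0_eq0 _ a) => p Hp; rewrite gax.
  by apply: contrapT => /eqP pax; apply: nx; exists p.
by exists p; split=> //; split=> //; split=> //; have [pos _] := hz p Hp a; exact: pos.
Qed.

Lemma source_to_target m (gs : 'I_m -> {ffun D -> G}) (x : tH) :
  in_source_ideal le gs x -> in_target_ideal le gs (iota0 x).
Proof.
move=> [zs [hzs xE]]; exists (fun i => iota0 (zs i)); split.
  by move=> i; apply/iota0_tseries_ok/fs_inP/hzs.
move=> d; apply: teq_trans (iota0_teq xE d) _.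
by rewrite iota0_bigcat; apply: teq_bigcat => i; exact: iota0_mul_mono.
Qed.

(* The part of [z] divisible by the monomial [t^g]. *)
Definition tH_restrict (g : {ffun D -> G}) (z : tH) : tH :=
  [seq (p.1, [ffun a => fun x => if le (g a) x then p.2 a x else 0]) | p : elt <- z].

Definition tH_unshift (g : {ffun D -> G}) (z : tH) : tH :=
  [seq (p.1, [ffun a => fun x => if le 0 x then p.2 a (x + g a) else 0]) | p : elt <- z].

Lemma tH_restrictE g z : tH_restrict g z = tH_mul_mono le g (tH_unshift g z).
Proof.
rewrite /tH_restrict /tH_mul_mono /tH_unshift -map_comp; apply: eq_map => p /=; congr (_, _).
apply/ffunP => a; rewrite !ffunE; apply: funext => x; rewrite /shift1.
by case: ifP => gx //; rewrite le_subr_ge0 // gx subrK.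
Qed.

Lemma all_in_restrict g z : all_in hahn z -> all_in hahn (tH_restrict g z).
Proof.
by move=> hz _ /List.in_map_iff [p [<- Hp]] a /=; rewrite ffunE; apply/hahn1_restrict/hz.
Qed.

Lemma all_in_unshift g z : mnonneg le g -> all_in hahn z -> all_in hahn (tH_unshift g z).
Proof.
move=> g0 hz _ /List.in_map_iff [p [<- Hp]] a /=.
by rewrite ffunE; apply/(hahn1_unshift Hle)/hz.
Qed.

Lemma iota0_restrict g (z : tH) d :
  TA (iota0 (tH_restrict g z) d) (if mle le g d then iota0 z d else [::]).
Proof.
case: ifP => [gd | /negbT /mlePn [a gda]].
  suff -> : iota0 (tH_restrict g z) d = iota0 z d by exact: teq_refl.
  rewrite /iota0 /tH_restrict -map_comp; apply: eq_map => p /=; congr (_, _).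
  by apply/ffunP => a; rewrite !ffunE (forallP gd a).
apply: teq_all0 => _ /List.in_map_iff [_ [<- /List.in_map_iff [p [<- _]]]].
by apply: (teqA_zero_factor (a := a)); rewrite /= !ffunE (negbTE gda).
Qed.

Lemma tH_decompose m (gs : 'I_m -> {ffun D -> G}) (z : tH) :
  (forall i, mnonneg le (gs i)) -> all_in hahn z ->
  exists2 zs : 'I_m -> tH, (forall i, all_in hahn (zs i)) &
  exists2 r : tH,
    all_in hahn r /\ TH z ((\big[cat/[::]]_(i < m) tH_mul_mono le (gs i) (zs i)) ++ r) &
    forall d, TA (iota0 r d) (if [exists i, mle le (gs i) d] then [::] else iota0 z d).
Proof.
elim: m gs z => [|m IH] gs z gs0 hz.
  exists (fun _ => [::]); first by case.
  exists z; first by rewrite big_ord0; split=> //; exact: teq_refl.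
  by move=> d; rewrite (_ : [exists i, _] = false); [exact: teq_refl | apply/existsP => -[[]]].
set g := gs ord0; set z' := z ++ fs_scale (-1) (tH_restrict g z).
have hz' : all_in hahn z' by apply: all_in_cat hz (all_in_scale (all_in_restrict hz)).
have [zs hzs [r [hr zE] rd]] := IH (fun i => gs (lift ord0 i)) z' (fun i => gs0 _) hz'.
exists (ord_cons (tH_unshift g z) zs).
  move=> i; rewrite /ord_cons; case: (unlift ord0 i) => [j|]; first exact: hzs.
  exact: all_in_unshift (gs0 ord0) hz.
exists r.
  split=> //; rewrite big_ord_recl /ord_cons unlift_none; under eq_bigr do rewrite liftK.
  rewrite -catA -tH_restrictE; apply: teq_trans (teq_split _ _ _ z (tH_restrict g z)) _.
  exact: teq_catr zE.
move=> d; apply: teq_trans (rd d) _.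
have -> : [exists i, mle le (gs i) d] = mle le g d || [exists j, mle le (gs (lift ord0 j)) d].
  apply/existsP/orP => [[i]|[gd|/existsP [j]]]; last 2 first.
  - by exists ord0.
  - by exists (lift ord0 j).
  by case: (unliftP ord0 i) => [j ->|->]; [right; apply/existsP; exists j | left].
case: ifP => _; first by rewrite orbT; exact: teq_refl.
rewrite orbF /z' iota0_cat iota0_scale; have := iota0_restrict g z d.
case: ifP => _ restr; first exact: (teq_subr0P _ _ _ _ _).1 (teq_sym restr).
apply: teq_trans (teq_catr _ (teq_scale (-1) restr)) _.
by rewrite cats0; exact: teq_refl.
Qed.

Lemma target_to_source m (gs : 'I_m -> {ffun D -> G}) (x : tH) :
  (forall i, mnonneg le (gs i)) -> tH_in le x ->
  in_target_ideal le gs (iota0 x) -> in_source_ideal le gs x.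
Proof.
move=> gs0 /fs_inP hx [h [hok xE]].
have [zs hzs [r [hr xzr] rd]] := tH_decompose gs0 hx.
exists zs; split=> [i|]; first exact/fs_inP.
have r0 : TH r [::].
  apply: (iota0_inj Hle); [exact/fs_inP | by case | move=> d].
  apply: teq_trans (rd d) _; case: ifP => [_|/negbT nex]; first exact: teq_refl.
  apply: teq_trans (xE d) _; apply: teq_bigcat0 => i.
  case: ifP => gid; last exact: teq_refl.
  by case/negP: nex; apply/existsP; exists i.
apply: teq_trans xzr (teq_trans (teq_catr _ r0) _).
by rewrite cats0; exact: teq_refl.
Qed.

End Ideals.

Theorem mainTheorem6 (k : fieldType) (A : comAlgType k) (D : finType)
    (G : zmodType) (le : rel G) :
  ordered_group le -> noetherian A ->
  (forall x y : tH A G D, tH_in le x -> tH_in le y ->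
     (forall g, teqA (iota0 x g) (iota0 y g)) -> teqH le x y) /\
  (forall (m : nat) (gs : 'I_m -> {ffun D -> G}),
     (forall i, mnonneg le (gs i)) ->
     forall x : tH A G D, tH_in le x ->
       (in_target_ideal le gs (iota0 x) <-> in_source_ideal le gs x)).
Proof.
move=> Hle _; split; first exact: iota0_inj.
move=> m gs gs0 x hx; split; first exact: target_to_source.
exact: source_to_target.
Qed.
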